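(* Consider the iterates $(\theta_t,K_t)$ of the algorithm in the context, suppose $D_\epsilon$ is positive definite with minimal eigenvalue $\sigma_{\min}(D_\epsilon)$, and suppose there are constants $\rho\in(0,1)$, $c_A,c_E,c_\theta,c_K>0$ such that for all $t$: $\rho(A-BK_t)\le\rho$, $\|A-BK_t\|\le c_A$, $\|E_t\|\le c_E$, $\|\theta_t\|_F\le c_\theta$, $\|K_t\|\le c_K$, $\|K^*\|\le c_K$. Let $c_D,c_P$ be constants, independent of $t$, with $D_{K_t}\preceq c_DI$, $D_{K^*}\preceq c_DI$ and $P_{K_t}\preceq c_PI$ for all $t$, and let $c_3=\|D_{K^*}\|/\sigma_{\min}(R)$. Then for every $t$, with $\widehat G_{K_t}=\theta_t^{22}K_t-\theta_t^{21}$, $$J(K_{t+1})-J(K_t)\le-\beta_t\frac{\sigma_{\min}(D_\epsilon)}{c_3}\big(J(K_t)-J(K^* )\big)-\beta_t\big[\sigma_{\min}(D_\epsilon)-\beta_tc_D(\|R\|+c_P\|B\|^2)\big]\|\widehat G_{K_t}\|_F^2+\beta_tc_D\|G_{K_t}-\widehat G_{K_t}\|_F^2.$$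
   Context: Fix $A\in\mathbb{R}^{d\times d}$, $B\in\mathbb{R}^{d\times k}$, symmetric positive definite $Q,R$, symmetric positive semidefinite $D_\xi$, $\sigma>0$. Dynamics $x_{s+1}=Ax_s+Bu_s+\xi_s$, $\xi_s\sim N(0,D_\xi)$; policy $\pi_K$: $u=-Kx+\sigma\omega$, $\omega\sim N(0,I_k)$; $J(K)=\lim_{S\to\infty}\mathbb{E}\big[\frac1S\sum_{s<S}(x_s^\top Qx_s+u_s^\top Ru_s)\big]$ under $\pi_K$. $D_\epsilon=D_\xi+\sigma^2BB^\top$; $\rho(\cdot)$ spectral radius, $\|\cdot\|$ operator norm, $\sigma_{\min}$ minimal eigenvalue. For $\rho(A-BK)<1$: $D_K$ solves $D_K=D_\epsilon+(A-BK)D_K(A-BK)^\top$, $P_K$ solves $P_K=Q+K^\top RK+(A-BK)^\top P_K(A-BK)$, and $G_K=(R+B^\top P_KB)K-B^\top P_KA$. $K^*=(R+B^\top P^*B)^{-1}B^\top P^*A$ with $P^*$ the stabilizing solution of $P^*=Q+A^\top P^*A-A^\top P^*B(R+B^\top P^*B)^{-1}B^\top P^*A$; $K^*$ minimizes $J$ over stabilizing gains. Algorithm: with step sizes $\alpha_t,\beta_t>0$, $\theta_0=0\in\mathbb{R}^{(d+k)\times(d+k)}$, $K_0=0$; $\theta_{t+1}=\theta_t-\alpha_tg_t$ with $g_t$ a random critic-gradient estimate computed from simulated trajectories under $\pi_{K_t}$, and the actor update $K_{t+1}=K_t-\beta_t(\theta_t^{22}K_t-\theta_t^{21})$, where $\theta^{21}\in\mathbb{R}^{k\times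 d}$, $\theta^{22}\in\mathbb{R}^{k\times k}$ are the lower-left and lower-right blocks of $\theta$. $E_t=\begin{bmatrix}A&B\\-K_tA&-K_tB\end{bmatrix}$. The assumed bounds hold almost surely. *)

From HB Require Import structures.
From Stdlib Require Import Reals.
From mathcomp Require Import all_boot all_order all_algebra.
From mathcomp Require Import all_classical all_reals all_analysis.
From mathcomp Require Import Rstruct Rstruct_topology.
From mathcomp Require Import complex.

Set Implicit Arguments.
Unset Strict Implicit.
Unset Printing Implicit Defensive.

Import Order.TTheory GRing.Theory Num.Theory.
Local Open Scope ring_scope.
Local Open Scope classical_set_scope.

Notation RR := Rdefinitions.R.

Definition mxC n (M : 'M[RR]_n) : 'M[complex.complex RR]_n :=
  map_mx (fun x : RR => complex.Complex x 0) M.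

Definition cmod (z : complex.complex RR) : RR :=
  let: complex.Complex a b := z in Num.sqrt (a ^+ 2 + b ^+ 2).

Definition spectral_radius n (M : 'M[RR]_n) : RR :=
  sup [set cmod z | z in [set z | eigenvalue (mxC M) z]].

Definition vnorm n (x : 'cV[RR]_n) : RR := Num.sqrt (\sum_i (x i 0) ^+ 2).

Definition opnorm m n (M : 'M[RR]_(m, n)) : RR :=
  sup [set vnorm (M *m x) | x in [set x : 'cV[RR]_n | vnorm x = 1]].

Definition frob m n (M : 'M[RR]_(m, n)) : RR :=
  Num.sqrt (\sum_i \sum_j (M i j) ^+ 2).

Definition lambda_min n (M : 'M[RR]_n) : RR := inf [set l | eigenvalue M l].

Definition qform n (M : 'M[RR]_n) (x : 'cV[RR]_n) : RR := (x^T *m M *m x) 0 0.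

Definition symmx n (M : 'M[RR]_n) : Prop := M^T = M.
Definition psd n (M : 'M[RR]_n) : Prop := symmx M /\ forall x, 0 <= qform M x.
Definition pd n (M : 'M[RR]_n) : Prop :=
  symmx M /\ forall x, x != 0 -> 0 < qform M x.
Definition loewner_le n (M N : 'M[RR]_n) : Prop := psd (N - M).

Definition Deps d k (B : 'M[RR]_(d, k)) (Dxi : 'M[RR]_d) (sigma : RR) : 'M[RR]_d :=
  Dxi + sigma ^+ 2 *: (B *m B^T).

(* Covariance E[x_s x_s^T] of the state under pi_K, started at x_0 = 0:
   Sigma_{s+1} = (A - BK) Sigma_s (A - BK)^T + D_eps. *)
Fixpoint state_cov d k (A : 'M[RR]_d) (B : 'M[RR]_(d, k)) (Dxi : 'M[RR]_d)
    (sigma : RR) (K : 'M[RR]_(k, d)) (s : nat) : 'M[RR]_d :=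
  match s with
  | 0 => 0
  | s'.+1 => let S := state_cov A B Dxi sigma K s' in
             (A - B *m K) *m S *m (A - B *m K)^T + Deps B Dxi sigma
  end.

(* Expected stage cost E[x_s^T Q x_s + u_s^T R u_s] with u_s = -K x_s + sigma w_s,
   w_s ~ N(0, I_k) independent of x_s ~ N(0, Sigma_s). *)
Definition stage_cost d k (A : 'M[RR]_d) (B : 'M[RR]_(d, k)) (Q : 'M[RR]_d)
    (R : 'M[RR]_k) (Dxi : 'M[RR]_d) (sigma : RR) (K : 'M[RR]_(k, d)) (s : nat) : RR :=
  let S := state_cov A B Dxi sigma K s in
  \tr (Q *m S) + \tr (R *m (K *m S *m K^T)) + sigma ^+ 2 * \tr R.

Definition Jcost d k (A : 'M[RR]_d) (B : 'M[RR]_(d, k)) (Q : 'M[RR]_d)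
    (R : 'M[RR]_k) (Dxi : 'M[RR]_d) (sigma : RR) (K : 'M[RR]_(k, d)) : RR :=
  limn (fun S : nat => (S%:R)^-1 * \sum_(s < S) stage_cost A B Q R Dxi sigma K s).

Definition GK d k (A : 'M[RR]_d) (B : 'M[RR]_(d, k)) (R : 'M[RR]_k)
    (P : 'M[RR]_d) (K : 'M[RR]_(k, d)) : 'M[RR]_(k, d) :=
  (R + B^T *m P *m B) *m K - B^T *m P *m A.

Definition theta21 d k (th : 'M[RR]_(d + k)) : 'M[RR]_(k, d) := dlsubmx th.
Definition theta22 d k (th : 'M[RR]_(d + k)) : 'M[RR]_k := drsubmx th.

Definition Ghat d k (th : 'M[RR]_(d + k)) (K : 'M[RR]_(k, d)) : 'M[RR]_(k, d) :=
  theta22 th *m K - theta21 th.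

Definition Emx d k (A : 'M[RR]_d) (B : 'M[RR]_(d, k)) (K : 'M[RR]_(k, d))
    : 'M[RR]_(d + k) :=
  block_mx A B (- (K *m A)) (- (K *m B)).

Definition Kopt d k (A : 'M[RR]_d) (B : 'M[RR]_(d, k)) (R : 'M[RR]_k)
    (P : 'M[RR]_d) : 'M[RR]_(k, d) :=
  invmx (R + B^T *m P *m B) *m B^T *m P *m A.

From HB Require Import structures.
From Stdlib Require Import Reals.
From mathcomp Require Import all_boot all_order all_algebra.
From mathcomp Require Import all_classical all_reals all_analysis.
From mathcomp Require Import Rstruct Rstruct_topology.
From mathcomp Require Import complex.
From mathcomp Require Import ring lra.

(* Since the spectral radius of L = A - B K is below 1, the powers of L vanish:
   factor the characteristic polynomial over C and peel off one root at a time
   using Cayley-Hamilton. Hence the state covariance converges to the solution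
   D_K of D = D_eps + L D L^T and J(K) = tr((Q + K^T R K) D_K) + sigma^2 tr R.
   Pairing the Lyapunov equations of D_{K - Dl} and P_K gives the exact cost
   difference J(K - Dl) - J(K) = tr(D_{K - Dl} (- Dl^T G - G^T Dl + Dl^T M Dl))
   with G = G_K and M = R + B^T P_K B.
   For the actor step Dl = beta Ghat, the polarization identity
   Ghat^T G + G^T Ghat = G^T G + Ghat^T Ghat - (G - Ghat)^T (G - Ghat) and the
   bounds lambda_min(D_eps) I <= D_{K_(t+1)} <= c_D I bound the difference.
   For Dl = K - K_opt, completing the square with M >= lambda_min(R) I gives the
   gradient domination J(K) - J(K_opt) <= c_3 |G_K|_F^2, which trades the
   - beta lambda_min(D_eps) |G_K|_F^2 term for the optimality gap. *)

Set Implicit Arguments.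
Unset Strict Implicit.
Unset Printing Implicit Defensive.

Import Order.TTheory GRing.Theory Num.Theory.
Import numFieldNormedType.Exports.
Local Open Scope ring_scope.
Local Open Scope classical_set_scope.

Section VanishingSequences.
Variable R : realType.

Lemma cvg_sum (I : Type) (r : seq I) (P : pred I) (F : I -> nat -> R) (a : I -> R) :
  (forall i, P i -> F i @ \oo --> a i) ->
  (fun s => \sum_(i <- r | P i) F i s) @ \oo --> \sum_(i <- r | P i) a i.
Proof. exact: (cvg_big (x0 := 0) add_continuous). Qed.

Lemma cvg0_norm_le (u v : nat -> R) :
  v @ \oo --> 0 -> (forall s, `|u s| <= `|v s|) -> u @ \oo --> 0.
Proof.
move=> v0 uv; apply/cvgr0Pnorm_le => e e0.
have [N _ vN] := cvgr0_norm_le _ v0 _ e0.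
by exists N => // s /= Ns; apply: le_trans (uv s) (vN s Ns).
Qed.

Lemma cvg0_contraction (u v : nat -> R) r : 0 <= r -> r < 1 ->
  (forall s, 0 <= u s) -> v @ \oo --> 0 ->
  (forall s, u s.+1 <= r * u s + `|v s|) -> u @ \oo --> 0.
Proof.
move=> r0 r1 u0 v0 contr; apply/cvgr0Pnorm_le => e e0.
have e20 : 0 < e / 2 by rewrite divr_gt0.
have r10 : 0 < 1 - r by rewrite subr_gt0.
have [N _ vN] := cvgr0_norm_le _ v0 _ (mulr_gt0 e20 r10).
have geom k : u (N + k)%N <= r ^+ k * u N + e / 2.
  elim: k => [|k IH]; first by rewrite addn0 expr0 mul1r lerDl ltW.
  rewrite addnS (le_trans (contr _)) // exprS -mulrA.
  have := vN _ (leq_addr k N); have := ler_wpM2l r0 IH.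
  lra.
have rN : (fun k => r ^+ k * u N) @ \oo --> 0.
  rewrite -(mul0r (u N)); apply: cvgM; last exact: cvg_cst.
  by apply: cvg_expr; rewrite ger0_norm.
have [M _ rM] := cvgr0_norm_le _ rN _ e20.
exists (N + M)%N => // s /= NMs; have Ns := leq_trans (leq_addr M N) NMs.
rewrite ger0_norm // -(subnKC Ns) (le_trans (geom _)) //.
have /ler_normlW : `|r ^+ (s - N) * u N| <= e / 2 by apply: rM; rewrite /= leq_subRL.
lra.
Qed.

End VanishingSequences.

Section MatrixSequences.
Variable R : realType.

Definition mx_cvg m n (M : nat -> 'M[R]_(m, n)) (L : 'M[R]_(m, n)) :=
  forall i j, (fun s => M s i j) @ \oo --> L i j.

Lemma mx_cvg_cst m n (C : 'M[R]_(m, n)) : mx_cvg (fun=> C) C.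
Proof. by move=> i j; exact: cvg_cst. Qed.

Lemma mx_cvgB m n (M N : nat -> 'M[R]_(m, n)) L L' :
  mx_cvg M L -> mx_cvg N L' -> mx_cvg (fun s => M s - N s) (L - L').
Proof.
move=> ML NL' i j; rewrite !mxE.
by under eq_cvg do rewrite !mxE; apply: cvgB.
Qed.

Lemma mx_cvgT m n (M : nat -> 'M[R]_(m, n)) L :
  mx_cvg M L -> mx_cvg (fun s => (M s)^T) L^T.
Proof. by move=> ML i j; rewrite mxE; under eq_cvg do rewrite mxE; exact: ML. Qed.

Lemma mx_cvgM m n p (M : nat -> 'M[R]_(m, n)) (N : nat -> 'M[R]_(n, p)) L L' :
  mx_cvg M L -> mx_cvg N L' -> mx_cvg (fun s => M s *m N s) (L *m L').
Proof.
move=> ML NL' i j; rewrite mxE; under eq_cvg do rewrite mxE.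
by apply: cvg_sum => k _; apply: cvgM.
Qed.

Lemma mxtrace_cvg n (M : nat -> 'M[R]_n) L :
  mx_cvg M L -> (fun s => \tr (M s)) @ \oo --> \tr L.
Proof. by move=> ML; apply: cvg_sum => i _; exact: ML. Qed.

End MatrixSequences.

Lemma trmxD m n (X Y : 'M[RR]_(m, n)) : (X + Y)^T = X^T + Y^T.
Proof. exact: linearD. Qed.

Lemma trmxN m n (X : 'M[RR]_(m, n)) : (- X)^T = - X^T.
Proof. exact: linearN. Qed.

Lemma trmxZ m n c (X : 'M[RR]_(m, n)) : (c *: X)^T = c *: X^T.
Proof. exact: linearZ. Qed.

Lemma trmxX n (L : 'M[RR]_n) s : (L ^+ s)^T = L^T ^+ s.
Proof.
elim: s => [|s IH]; first by rewrite !expr0 trmx1.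
have LS : L ^+ s.+1 = L ^+ s *m L by rewrite exprSr.
by rewrite LS trmx_mul IH exprS.
Qed.

Lemma cmod_normc (z : RR[i]) : cmod z = ComplexField.Normc.normc z.
Proof. by case: z. Qed.

Lemma cmod_ge0 (z : RR[i]) : 0 <= cmod z.
Proof. by case: z => a b; rewrite /cmod sqrtr_ge0. Qed.

Lemma cmodD (a b : RR[i]) : cmod (a + b) <= cmod a + cmod b.
Proof. by rewrite !cmod_normc; apply: le_normcD. Qed.

Lemma cmodM (a b : RR[i]) : cmod (a * b) = cmod a * cmod b.
Proof. by rewrite !cmod_normc; apply: ComplexField.Normc.normcM. Qed.

Lemma cmod_real (x : RR) : cmod (Complex x 0) = `|x|.
Proof. by rewrite /cmod expr0n /= addr0 sqrtr_sqr. Qed.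

Lemma char_poly_split n (C : 'M[RR[i]]_n) :
  exists r : seq RR[i], char_poly C = \prod_(z <- r) ('X - z%:P).
Proof.
have [r ->] := closed_field_poly_normal (char_poly C).
by exists r; rewrite (monicP (char_poly_monic C)) scale1r.
Qed.

Lemma eigenvalue_cmod_bounded n (C : 'M[RR[i]]_n) :
  exists b, forall z, eigenvalue C z -> cmod z <= b.
Proof.
have [r Cr] := char_poly_split C.
exists (\sum_(w <- r) cmod w) => z; rewrite eigenvalue_root_char Cr root_prod_XsubC.
elim: r {Cr} => // w r IH; rewrite in_cons big_cons => /orP[/eqP ->|/IH zr].
  by rewrite lerDl sumr_ge0 // => x _; rewrite cmod_ge0.
by rewrite (le_trans zr) // lerDr cmod_ge0.
Qed.

Lemma eigenvalue_le_spectral_radius n (L : 'M[RR]_n) z :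
  eigenvalue (mxC L) z -> cmod z <= spectral_radius L.
Proof.
move=> Lz; apply: ub_le_sup; last by exists z.
have [b hb] := eigenvalue_cmod_bounded (mxC L).
by exists b => _ [w Lw <-]; apply: hb.
Qed.

Definition cmx_cvg0 m n (M : nat -> 'M[RR[i]]_(m, n)) :=
  forall i j, (fun s => cmod (M s i j)) @ \oo --> (0 : RR).

(* Y s := X * C ^+ s satisfies Y s.+1 = z * Y s + X * (C - z) * C ^+ s. *)
Lemma cmx_cvg0_peel_factors n (C X : 'M[RR[i]]_n.+1) (r : seq RR[i]) :
  (forall z, z \in r -> cmod z < 1) ->
  cmx_cvg0 (fun s => X * \prod_(z <- r) (C - z%:M) * C ^+ s) ->
  cmx_cvg0 (fun s => X * C ^+ s).
Proof.
elim: r X => [|z r IH] X r1 XrC.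
  by move: XrC; rewrite big_nil mulr1.
have XzC : cmx_cvg0 (fun s => X * (C - z%:M) * C ^+ s).
  apply: IH => [w wr|]; first by apply: r1; rewrite in_cons wr orbT.
  by move: XrC; rewrite big_cons mulrA.
move=> i j; apply: (cvg0_contraction (cmod_ge0 z) (r1 z (mem_head z r)) _ (XzC i j)).
  by move=> s; exact: cmod_ge0.
move=> s.
have -> : (X * C ^+ s.+1) i j = z * (X * C ^+ s) i j + (X * (C - z%:M) * C ^+ s) i j.
  have Xz : X * z%:M = z *: X by apply: mul_mx_scalar.
  rewrite mulrBr mulrBl Xz -scalerAl -mulrA -exprS.
  by rewrite !mxE; ring.
by rewrite ger0_norm ?cmod_ge0 // -cmodM cmodD.
Qed.

Lemma cmx_pow_cvg0 n (C : 'M[RR[i]]_n.+1) :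
  (forall z, eigenvalue C z -> cmod z < 1) -> cmx_cvg0 (fun s => C ^+ s).
Proof.
move=> C1; have [r Cr] := char_poly_split C.
have r1 z : z \in r -> cmod z < 1.
  by move=> zr; apply: C1; rewrite eigenvalue_root_char Cr root_prod_XsubC.
have CH : \prod_(z <- r) (C - z%:M) = 0.
  rewrite -(Cayley_Hamilton C) Cr rmorph_prod; apply: eq_bigr => z _.
  by rewrite rmorphB /= horner_mx_X horner_mx_C.
have -> : (fun s => C ^+ s) = (fun s => 1 * C ^+ s) by apply/funext => s; rewrite mul1r.
apply: cmx_cvg0_peel_factors r1 _ => i j.
under eq_cvg do rewrite CH mulr0 mul0r mxE.
by rewrite cmod_normc ComplexField.Normc.normc0; exact: cvg_cst.
Qed.

Lemma mxC_pow n (L : 'M[RR]_n.+1) s : mxC (L ^+ s) = mxC L ^+ s.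
Proof. exact: (rmorphXn (map_mx (real_complex RR))). Qed.

Lemma spectral_radius_lt1_pow_cvg0 n (L : 'M[RR]_n) :
  spectral_radius L < 1 -> mx_cvg (fun s => L ^+ s) 0.
Proof.
case: n L => [|n] L L1 i j; first by case: i.
have LC := cmx_pow_cvg0 (fun z Lz => le_lt_trans (eigenvalue_le_spectral_radius Lz) L1).
rewrite mxE; apply: cvg0_norm_le (LC i j) _ => s.
by rewrite -mxC_pow /mxC mxE cmod_real normr_id.
Qed.

Lemma vnorm_ge0 n (x : 'cV[RR]_n) : 0 <= vnorm x.
Proof. exact: sqrtr_ge0. Qed.

Lemma vnorm2E n (x : 'cV[RR]_n) : vnorm x ^+ 2 = \sum_i x i 0 ^+ 2.
Proof. by rewrite sqr_sqrtr // sumr_ge0 // => i _; rewrite sqr_ge0. Qed.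

Lemma vnorm2_mx n (x : 'cV[RR]_n) : vnorm x ^+ 2 = (x^T *m x) 0 0.
Proof. by rewrite vnorm2E mxE; apply: eq_bigr => i _; rewrite mxE expr2. Qed.

Lemma vnorm_eq0 n (x : 'cV[RR]_n) : (vnorm x == 0) = (x == 0).
Proof.
apply/idP/eqP => [|->]; last by rewrite /vnorm big1 ?sqrtr0 // => i _; rewrite mxE expr0n.
rewrite -sqrf_eq0 vnorm2E => /eqP /psumr_eq0P x0.
apply/matrixP => i j; rewrite ord1 mxE; apply/eqP; rewrite -sqrf_eq0; apply/eqP.
by apply: x0 => // k _; exact: sqr_ge0.
Qed.

Lemma vnorm0 n : vnorm (0 : 'cV[RR]_n) = 0.
Proof. by apply/eqP; rewrite vnorm_eq0. Qed.

Lemma vnormZ n c (x : 'cV[RR]_n) : vnorm (c *: x) = `|c| * vnorm x.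
Proof.
rewrite /vnorm -sqrtr_sqr -sqrtrM ?sqr_ge0 // mulr_sumr.
by congr Num.sqrt; apply: eq_bigr => i _; rewrite mxE exprMn.
Qed.

Lemma mulmx_AMGM n (x y : 'cV[RR]_n) t : 0 < t ->
  2 * (x^T *m y) 0 0 <= t * vnorm x ^+ 2 + t^-1 * vnorm y ^+ 2.
Proof.
move=> t0; rewrite !vnorm2E mxE !mulr_sumr -big_split /= ler_sum // => i _.
rewrite mxE; set a := x i 0; set b := y i 0.
have -> : t * a ^+ 2 + t^-1 * b ^+ 2 = t^-1 * (t * a - b) ^+ 2 + 2 * (a * b).
  by field; rewrite gt_eqF.
by rewrite lerDr mulr_ge0 ?sqr_ge0 // invr_ge0 ltW.
Qed.

Lemma opnorm_ubound m n (M : 'M[RR]_(m, n)) :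
  has_ubound [set vnorm (M *m x) | x in [set x : 'cV[RR]_n | vnorm x = 1]].
Proof.
exists (Num.sqrt (\sum_i (\sum_j `|M i j|) ^+ 2)) => _ [x /= x1 <-].
rewrite /vnorm ler_sqrt ?sumr_ge0 // => [|i _]; last exact: sqr_ge0.
have xj1 j : `|x j 0| <= 1.
  rewrite -(ler_pXn2r (_ : (0 < 2)%N)) ?nnegrE // expr1n real_normK ?num_real //.
  rewrite -(expr1n _ 2) -x1 vnorm2E (bigD1 j) //= lerDl.
  by apply: sumr_ge0 => i _; exact: sqr_ge0.
apply: ler_sum => i _; rewrite -real_normK ?num_real // ler_sqr ?nnegrE ?sumr_ge0 //.
rewrite mxE (le_trans (ler_norm_sum _ _ _)) // ler_sum // => j _.
by rewrite normrM ler_piMr.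
Qed.

Lemma opnorm_ge0 m n (M : 'M[RR]_(m, n)) : 0 <= opnorm M.
Proof.
rewrite /opnorm; set S := [set _ | _ in _].
have [->|/set0P[v Sv]] := eqVneq S set0; first by rewrite sup0.
have [x _ xv] := Sv.
apply: le_trans (vnorm_ge0 (M *m x)) _; rewrite xv.
exact: ub_le_sup (opnorm_ubound M) _ Sv.
Qed.

Lemma opnorm_le m n (M : 'M[RR]_(m, n)) x : vnorm (M *m x) <= opnorm M * vnorm x.
Proof.
have [->|x0] := eqVneq x 0; first by rewrite mulmx0 !vnorm0 mulr0.
have nx0 : 0 < vnorm x by rewrite lt_def vnorm_eq0 x0 vnorm_ge0.
set y := (vnorm x)^-1 *: x.
have y1 : vnorm y = 1 by rewrite vnormZ ger0_norm ?invr_ge0 ?ltW // mulVf ?gt_eqF.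
have -> : M *m x = vnorm x *: (M *m y).
  by rewrite -scalemxAr scalerA divff ?gt_eqF // scale1r.
rewrite vnormZ ger0_norm ?vnorm_ge0 // [opnorm M * _]mulrC ler_wpM2l ?vnorm_ge0 //.
by apply: ub_le_sup (opnorm_ubound M) _ _; exists y.
Qed.

Lemma opnorm_le2 m n (M : 'M[RR]_(m, n)) x :
  vnorm (M *m x) ^+ 2 <= opnorm M ^+ 2 * vnorm x ^+ 2.
Proof.
by rewrite -exprMn ler_sqr ?nnegrE ?mulr_ge0 ?vnorm_ge0 ?opnorm_ge0 ?opnorm_le.
Qed.

Lemma qform_le_opnorm n (N : 'M[RR]_n) x : qform N x <= opnorm N * vnorm x ^+ 2.
Proof.
rewrite /qform -mulmxA; have [N0|N0] := eqVneq (opnorm N) 0.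
  have Nx0 : N *m x = 0.
    apply/eqP; rewrite -vnorm_eq0 eq_le vnorm_ge0 andbT.
    by have := opnorm_le N x; rewrite N0 mul0r.
  by rewrite Nx0 mulmx0 mxE N0 mul0r.
have t0 : 0 < opnorm N by rewrite lt_def N0 opnorm_ge0.
have := mulmx_AMGM x (N *m x) t0.
have : (opnorm N)^-1 * vnorm (N *m x) ^+ 2 <= opnorm N * vnorm x ^+ 2.
  by rewrite ler_pdivrMl // mulrA -expr2 opnorm_le2.
lra.
Qed.

Lemma qformD n (M N : 'M[RR]_n) x : qform (M + N) x = qform M x + qform N x.
Proof. by rewrite /qform mulmxDr mulmxDl mxE. Qed.

Lemma qformN n (M : 'M[RR]_n) x : qform (- M) x = - qform M x.
Proof. by rewrite /qform mulmxN mulNmx mxE. Qed.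

Lemma qformB n (M N : 'M[RR]_n) x : qform (M - N) x = qform M x - qform N x.
Proof. by rewrite qformD qformN. Qed.

Lemma qformZ n c (M : 'M[RR]_n) x : qform (c *: M) x = c * qform M x.
Proof. by rewrite /qform -scalemxAr -scalemxAl mxE. Qed.

Lemma qform0 n (x : 'cV[RR]_n) : qform 0 x = 0.
Proof. by rewrite /qform mulmx0 mul0mx mxE. Qed.

Lemma qform_sum n (I : Type) (r : seq I) (P : pred I) (F : I -> 'M[RR]_n) x :
  qform (\sum_(i <- r | P i) F i) x = \sum_(i <- r | P i) qform (F i) x.
Proof.
apply: (big_ind2 (fun M v => qform M x = v)) => [|M a N b <- <-|//].
  exact: qform0.
exact: qformD.
Qed.

Lemma qform_scalar n c (x : 'cV[RR]_n) : qform c%:M x = c * vnorm x ^+ 2.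
Proof. by rewrite /qform mul_mx_scalar -scalemxAl mxE vnorm2_mx. Qed.

Lemma qform_conj m n (L : 'M[RR]_(m, n)) (X : 'M[RR]_n) y :
  qform (L *m X *m L^T) y = qform X (L^T *m y).
Proof. by rewrite /qform trmx_mul trmxK !mulmxA. Qed.

Lemma qform_conjT m n (L : 'M[RR]_(m, n)) (X : 'M[RR]_m) y :
  qform (L^T *m X *m L) y = qform X (L *m y).
Proof. by rewrite -{2}[L]trmxK qform_conj trmxK. Qed.

Lemma qform_cross m n (X Y : 'M[RR]_(m, n)) x :
  qform (X^T *m Y) x = ((X *m x)^T *m (Y *m x)) 0 0.
Proof. by rewrite /qform trmx_mul !mulmxA. Qed.

Lemma qform_outer n (a : 'rV[RR]_n) x : qform (a^T *m a) x = (a *m x) 0 0 ^+ 2.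
Proof. by rewrite qform_cross -vnorm2_mx vnorm2E big_ord1. Qed.

Lemma pd_psd n (X : 'M[RR]_n) : pd X -> psd X.
Proof.
move=> [Xsym Xpd]; split=> // x; have [->|x0] := eqVneq x 0; last exact: ltW (Xpd x x0).
by rewrite /qform mulmx0 mxE.
Qed.

Lemma loewner_le_scalar n (X : 'M[RR]_n) c :
  loewner_le X c%:M -> forall x, qform X x <= c * vnorm x ^+ 2.
Proof. by move=> [_ Xc] x; have := Xc x; rewrite qformB qform_scalar subr_ge0. Qed.

Lemma loewner_le_scalar_sym n (X : 'M[RR]_n) c : loewner_le X c%:M -> X^T = X.
Proof.
case=> + _; rewrite /symmx trmxD trmxN tr_scalar_mx => /addrI.
exact: oppr_inj.
Qed.

Lemma loewner_le_scalar_ge0 n (X : 'M[RR]_n) c : (0 < n)%N ->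
  (forall x, 0 <= qform X x) -> loewner_le X c%:M -> 0 <= c.
Proof.
move=> n0 Xpsd /loewner_le_scalar Xc; pose e : 'cV[RR]_n := delta_mx (Ordinal n0) 0.
have e1 : vnorm e ^+ 2 = 1.
  rewrite vnorm2E (bigD1 (Ordinal n0)) //= big1 => [|i /negbTE ne].
    by rewrite mxE !eqxx expr1n addr0.
  by rewrite mxE ne expr0n.
by have := le_trans (Xpsd e) (Xc e); rewrite e1 mulr1.
Qed.

Section SymmetricSpectral.
Local Open Scope sesquilinear_scope.
Local Notation Re := (@complex.Re RR).
Local Notation Im := (@complex.Im RR).

Lemma Re_sum (I : Type) (r : seq I) (P : pred I) (F : I -> RR[i]) :
  Re (\sum_(i <- r | P i) F i) = \sum_(i <- r | P i) Re (F i).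
Proof. by apply: (big_morph Re) => // [[a b] [c d]]. Qed.

Lemma Re_conj_mul (p q : RR[i]) :
  Re (Num.conj p * q) = Re p * Re q + Im p * Im q.
Proof. by case: p => x y; case: q => u v /=; ring. Qed.

Lemma eigenvalue_mxC n (N : 'M[RR]_n) (x : RR) :
  eigenvalue (mxC N) (x%:C)%C = eigenvalue N x.
Proof.
by rewrite !eigenvalue_root_char -[mxC N]/(map_mx (real_complex RR) N) -map_char_poly fmorph_root.
Qed.

(* a i and b i are the real and imaginary parts of the rows of a unitary matrix
   diagonalizing the complexification of N. *)
Lemma symmx_spectral_decomposition n (N : 'M[RR]_n) : N^T = N ->
  exists (s : 'I_n -> RR) (a b : 'I_n -> 'rV[RR]_n),
    [/\ forall i, eigenvalue N (s i),
        N = \sum_i s i *: ((a i)^T *m a i + (b i)^T *m b i) &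
        1%:M = \sum_i ((a i)^T *m a i + (b i)^T *m b i)].
Proof.
move=> Nsym; set NC := mxC N.
have NCsym : NC \is symmetricmx.
  apply/is_hermitianmxP; rewrite expr0 scale1r map_mx_id //.
  by rewrite /NC -[mxC N]/(map_mx (real_complex RR) N) map_trmx Nsym.
have NCreal : NC \is a realmx by apply/mxOverP => i j; rewrite /NC mxE complex_real.
have NCherm := realsym_hermsym NCsym NCreal.
set P := spectralmx NC; set sp := spectral_diag NC.
have NCP : NC = invmx P *m diag_mx sp *m P.
  exact: elimT (@orthomx_spectralP _ _ NC) (hermitian_normalmx NCherm).
have Punit : P \in unitmx := spectral_unit NC.
have Pinv : invmx P = P ^t* by apply: invmx_unitary; apply: spectral_unitarymx.
have PP : P ^t* *m P = 1%:M by rewrite -Pinv mulVmx.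
have sp_real l : sp 0 l = ((Re (sp 0 l))%:C)%C.
  by rewrite RRe_real //; apply: (mxOverP (hermitian_spectral_diag_real NCherm)).
exists (fun l => Re (sp 0 l)), (fun l => row l (map_mx Re P)), (fun l => row l (map_mx Im P)).
split.
- move=> l; rewrite -eigenvalue_mxC -sp_real; apply/eigenvalueP.
  exists ('e_l *m P).
    rewrite -/NC NCP !mulmxA (mulmxK Punit) -(rowE l (diag_mx sp)) row_diag_mx.
    by rewrite -scalemxAl.
  apply/eqP => e0; have : 'e_l = 0 :> 'rV[RR[i]]_n by rewrite -(mulmxK Punit 'e_l) e0 mul0mx.
  by move/matrixP => /(_ 0 l); rewrite !mxE !eqxx /= => /eqP; rewrite oner_eq0.
- apply/matrixP => j k; rewrite summxE.
  have -> : N j k = Re (NC j k) by rewrite /NC mxE.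
  rewrite NCP Pinv mul_mx_diag mxE Re_sum; apply: eq_bigr => l _.
  rewrite [in RHS]mxE [in RHS]mxE !mxE big_ord1 !mxE big_ord1 !mxE sp_real.
  by case: (P l j) => ? ?; case: (P l k) => ? ? /=; ring.
- apply/matrixP => j k; rewrite summxE.
  have -> : (1%:M : 'M[RR]_n) j k = Re ((1%:M : 'M[RR[i]]_n) j k).
    by rewrite !mxE; case: (j == k).
  rewrite -PP mxE Re_sum; apply: eq_bigr => l _.
  by rewrite [in RHS]mxE !mxE !big_ord1 !mxE Re_conj_mul.
Qed.

End SymmetricSpectral.

Lemma eigenvalue_lbound n (N : 'M[RR]_n) : has_lbound [set l | eigenvalue N l].
Proof.
have [b Nb] := eigenvalue_cmod_bounded (mxC N).
exists (- b) => l /= Nl; have := Nb _ (etrans (eigenvalue_mxC N l) Nl).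
by rewrite cmod_real lerNl => /(le_trans _); apply; rewrite -normrN ler_norm.
Qed.

Lemma lambda_min_le_qform n (N : 'M[RR]_n) : N^T = N ->
  forall x, lambda_min N * vnorm x ^+ 2 <= qform N x.
Proof.
move=> Nsym x; have [s [a [b [Ns NE IE]]]] := symmx_spectral_decomposition Nsym.
rewrite {2}NE -[vnorm x ^+ 2]mul1r -qform_scalar IE !qform_sum mulr_sumr.
apply: ler_sum => i _; rewrite qformZ; apply: ler_wpM2r.
  by rewrite qformD !qform_outer addr_ge0 ?sqr_ge0.
exact: ge_inf (eigenvalue_lbound N) _ (Ns i).
Qed.

Lemma eigenvalue_psd_ge0 n (N : 'M[RR]_n) l :
  (forall x, 0 <= qform N x) -> eigenvalue N l -> 0 <= l.
Proof.
move=> Npsd /eigenvalueP[v vN v0]; have := Npsd v^T.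
have -> : qform N v^T = l * vnorm v^T ^+ 2.
  by rewrite /qform trmxK vN -scalemxAl mxE vnorm2_mx trmxK.
rewrite pmulr_lge0 // exprn_gt0 // lt_def vnorm_ge0 vnorm_eq0 andbT.
by apply: contra v0 => /eqP v0; rewrite -[v]trmxK v0 trmx0.
Qed.

Lemma lambda_min_ge0 n (N : 'M[RR]_n) :
  (forall x, 0 <= qform N x) -> 0 <= lambda_min N.
Proof.
move=> Npsd; rewrite /lambda_min.
have [->|/set0P ne] := eqVneq [set l | eigenvalue N l] set0; first by rewrite inf0.
by apply: lb_le_inf ne _ => l; exact: eigenvalue_psd_ge0.
Qed.

Lemma mxtrace_mul_outer n (X : 'M[RR]_n) (a : 'rV[RR]_n) :
  \tr (X *m (a^T *m a)) = qform X a^T.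
Proof. by rewrite mulmxA mxtrace_mulC /qform trmxK mulmxA /mxtrace big_ord1. Qed.

Lemma mxtrace_mul_psd_ge0 n (X N : 'M[RR]_n) : N^T = N ->
  (forall x, 0 <= qform N x) -> (forall x, 0 <= qform X x) -> 0 <= \tr (X *m N).
Proof.
move=> Nsym Npsd Xpsd; have [s [a [b [Ns -> _]]]] := symmx_spectral_decomposition Nsym.
rewrite mulmx_sumr linear_sum; apply: sumr_ge0 => i _.
rewrite -scalemxAr linearZ mulmxDr linearD /= !mxtrace_mul_outer.
by rewrite mulr_ge0 ?addr_ge0 // (eigenvalue_psd_ge0 Npsd).
Qed.

Lemma mxtrace_mul_le_scalar n (X N : 'M[RR]_n) c : N^T = N ->
  (forall x, 0 <= qform N x) -> loewner_le X c%:M -> \tr (X *m N) <= c * \tr N.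
Proof.
move=> Nsym Npsd [_ Xc]; have := mxtrace_mul_psd_ge0 Nsym Npsd Xc.
by rewrite mulmxBl linearB /= mul_scalar_mx linearZ subr_ge0.
Qed.

Lemma frob2E m n (X : 'M[RR]_(m, n)) : frob X ^+ 2 = \sum_i \sum_j X i j ^+ 2.
Proof.
by rewrite sqr_sqrtr // sumr_ge0 // => i _; rewrite sumr_ge0 // => j _; exact: sqr_ge0.
Qed.

Lemma frob0 m n : frob (0 : 'M[RR]_(m, n)) = 0.
Proof. by apply/eqP; rewrite -sqrf_eq0 frob2E big1 // => i _; rewrite big1 // => j _; rewrite mxE expr0n. Qed.

Lemma frob_trmx m n (X : 'M[RR]_(m, n)) : frob X^T = frob X.
Proof.
rewrite /frob exchange_big; congr Num.sqrt.
by apply: eq_bigr => i _; apply: eq_bigr => j _; rewrite mxE.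
Qed.

Lemma mxtrace_conj_rows m n (X : 'M[RR]_(m, n)) (N : 'M[RR]_n) :
  \tr (X *m N *m X^T) = \sum_i qform N (row i X)^T.
Proof.
apply: eq_bigr => i _; rewrite /qform trmxK mxE [in RHS]mxE.
by apply: eq_bigr => k _; rewrite -row_mul !mxE.
Qed.

Lemma vnorm2_row m n (X : 'M[RR]_(m, n)) i : vnorm (row i X)^T ^+ 2 = \sum_j X i j ^+ 2.
Proof. by rewrite vnorm2E; apply: eq_bigr => j _; rewrite !mxE. Qed.

Lemma mxtrace_conj_ge m n (X : 'M[RR]_(m, n)) (N : 'M[RR]_n) c :
  (forall x, c * vnorm x ^+ 2 <= qform N x) -> c * frob X ^+ 2 <= \tr (X *m N *m X^T).
Proof.
move=> Nc; rewrite mxtrace_conj_rows frob2E mulr_sumr; apply: ler_sum => i _.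
by rewrite -vnorm2_row Nc.
Qed.

Lemma mxtrace_conj_le m n (X : 'M[RR]_(m, n)) (N : 'M[RR]_n) c :
  (forall x, qform N x <= c * vnorm x ^+ 2) -> \tr (X *m N *m X^T) <= c * frob X ^+ 2.
Proof.
move=> Nc; rewrite mxtrace_conj_rows frob2E mulr_sumr; apply: ler_sum => i _.
by rewrite -vnorm2_row Nc.
Qed.

Lemma mxtrace_gram m n (D : 'M[RR]_n) (X : 'M[RR]_(m, n)) :
  \tr (D *m (X^T *m X)) = \tr (X *m D *m X^T).
Proof. by rewrite mulmxA mxtrace_mulC mulmxA. Qed.

Lemma lyap_iterate n (L E D : 'M[RR]_n) (S : nat -> 'M[RR]_n) :
  S 0%N = 0 -> (forall s, S s.+1 = L *m S s *m L^T + E) -> D = E + L *m D *m L^T ->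
  forall s, S s = D - L ^+ s *m D *m (L ^+ s)^T.
Proof.
move=> S0 SS DE; elim => [|s IH]; first by rewrite S0 expr0 mul1mx trmx1 mulmx1 subrr.
have LS : L ^+ s.+1 = L *m L ^+ s by rewrite exprS.
rewrite SS IH LS trmx_mul mulmxBr mulmxBl !mulmxA [X in _ = X - _]DE.
by rewrite addrC addrA.
Qed.

Lemma lyap_iterate_cvg n (L E D : 'M[RR]_n) (S : nat -> 'M[RR]_n) :
  mx_cvg (fun s => L ^+ s) 0 ->
  S 0%N = 0 -> (forall s, S s.+1 = L *m S s *m L^T + E) -> D = E + L *m D *m L^T ->
  mx_cvg S D.
Proof.
move=> L0 S0 SS DE.
have -> : S = fun s => D - L ^+ s *m D *m (L ^+ s)^T.
  by apply/funext; exact: lyap_iterate.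
rewrite -[D in mx_cvg _ D]subr0; apply: mx_cvgB; first exact: mx_cvg_cst.
by have := mx_cvgM (mx_cvgM L0 (mx_cvg_cst (C := D))) (mx_cvgT L0); rewrite !mul0mx.
Qed.

Lemma lyap_solution_psd n (L E D : 'M[RR]_n) :
  mx_cvg (fun s => L ^+ s) 0 -> D = E + L *m D *m L^T ->
  (forall x, 0 <= qform E x) -> forall x, 0 <= qform D x.
Proof.
move=> L0 DE Epsd x.
pose S s := iter s (fun S => L *m S *m L^T + E) 0.
have Spsd s y : 0 <= qform (S s) y.
  elim: s y => [|s IH] y; first by rewrite qform0.
  by rewrite /= qformD qform_conj addr_ge0.
have SD := lyap_iterate_cvg L0 (erefl : S 0%N = 0) (fun s => erefl) DE.
have xSx : mx_cvg (fun s => x^T *m S s *m x) (x^T *m D *m x).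
  exact: mx_cvgM (mx_cvgM (mx_cvg_cst (C := x^T)) SD) (mx_cvg_cst (C := x)).
apply: (closed_cvg _ (@closed_ge _ 0) _ _ (xSx 0 0)).
by apply: nearW => s; exact: Spsd.
Qed.

Lemma Jcost_lyap d k (A : 'M[RR]_d) (B : 'M[RR]_(d, k)) (Q : 'M[RR]_d) (R : 'M[RR]_k)
    (Dxi : 'M[RR]_d) (sigma : RR) (K : 'M[RR]_(k, d)) (D : 'M[RR]_d) :
  spectral_radius (A - B *m K) < 1 ->
  D = Deps B Dxi sigma + (A - B *m K) *m D *m (A - B *m K)^T ->
  Jcost A B Q R Dxi sigma K = \tr ((Q + K^T *m R *m K) *m D) + sigma ^+ 2 * \tr R.
Proof.
move=> stable DE; set c := sigma ^+ 2 * \tr R.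
have SD : mx_cvg (state_cov A B Dxi sigma K) D.
  exact: lyap_iterate_cvg (spectral_radius_lt1_pow_cvg0 stable) erefl (fun s => erefl) DE.
have QS := mxtrace_cvg (mx_cvgM (mx_cvg_cst (C := Q)) SD).
have RS := mxtrace_cvg (mx_cvgM (mx_cvg_cst (C := R))
  (mx_cvgM (mx_cvgM (mx_cvg_cst (C := K)) SD) (mx_cvg_cst (C := K^T)))).
have cost : stage_cost A B Q R Dxi sigma K @ \oo -->
    \tr (Q *m D) + \tr (R *m (K *m D *m K^T)) + c.
  exact: cvgD (cvgD QS RS) (cvg_cst c).
have mean := cesaro cost.
rewrite /Jcost (cvg_lim (@Rhausdorff RR) (_ : _ --> \tr (Q *m D) + \tr (R *m (K *m D *m K^T)) + c)).
  by rewrite mulmxDl linearD /= -!mulmxA [\tr (K^T *m _)]mxtrace_mulC !mulmxA.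
rewrite -cvg_shiftS; apply: cvg_trans mean; apply: near_eq_cvg; apply: nearW => n /=.
by rewrite /arithmetic_mean /series /= big_mkord.
Qed.

Lemma mxtrace_lyap_dual n (P D E W L : 'M[RR]_n) :
  D = E + L *m D *m L^T -> P = W + L^T *m P *m L -> \tr (W *m D) = \tr (P *m E).
Proof.
move=> DE PW; have := congr1 (fun X => \tr (P *m X)) DE.
have cyc : \tr (P *m (L *m D *m L^T)) = \tr (L^T *m P *m L *m D).
  by rewrite !mulmxA mxtrace_mulC !mulmxA.
by rewrite {1}PW mulmxDl mulmxDr !linearD /= cyc => /addIr.
Qed.

Definition cost_change m n (Dl G : 'M[RR]_(m, n)) (M : 'M[RR]_m) : 'M[RR]_n :=
  - (Dl^T *m G) - G^T *m Dl + Dl^T *m M *m Dl.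

Lemma cost_change_scale m n (G Gh : 'M[RR]_(m, n)) (M : 'M[RR]_m) b :
  cost_change (b *: Gh) G M
  = - b *: (G^T *m G + Gh^T *m Gh - (G - Gh)^T *m (G - Gh)) + b ^+ 2 *: (Gh^T *m M *m Gh).
Proof.
rewrite /cost_change !(trmxD, trmxN, trmxZ) -!scalemxAl -!scalemxAr.
rewrite !(mulmxDl, mulmxDr, mulmxN, mulNmx).
by apply/matrixP => i j; rewrite !mxE; ring.
Qed.

Lemma cost_change_completed_psd m n (Dl G : 'M[RR]_(m, n)) (M : 'M[RR]_m) lam : 0 < lam ->
  (forall y, lam * vnorm y ^+ 2 <= qform M y) ->
  forall x, 0 <= qform (cost_change Dl G M + lam^-1 *: (G^T *m G)) x.
Proof.
move=> lam0 Mlam x.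
rewrite /cost_change !(qformD, qformN, qformZ) qform_conjT !qform_cross -vnorm2_mx.
have -> : ((G *m x)^T *m (Dl *m x)) 0 0 = ((Dl *m x)^T *m (G *m x)) 0 0.
  by rewrite !mxE; apply: eq_bigr => i _; rewrite !mxE mulrC.
have := mulmx_AMGM (Dl *m x) (G *m x) lam0; have := Mlam (Dl *m x).
lra.
Qed.

Lemma cost_change_completed_sym m n (Dl G : 'M[RR]_(m, n)) (M : 'M[RR]_m) c : M^T = M ->
  (cost_change Dl G M + c *: (G^T *m G))^T = cost_change Dl G M + c *: (G^T *m G).
Proof.
move=> Msym; rewrite /cost_change !(trmxD, trmxN, trmxZ) !trmx_mul !trmxK Msym mulmxA.
by congr (_ + _ + _); rewrite addrC.
Qed.

Lemma mxtrace_mul_lincomb n (D X Y Z W : 'M[RR]_n) b :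
  \tr (D *m (- b *: (X + Y - Z) + b ^+ 2 *: W)) =
  - b * (\tr (D *m X) + \tr (D *m Y) - \tr (D *m Z)) + b ^+ 2 * \tr (D *m W).
Proof.
rewrite mulmxDr -!scalemxAr mxtraceD !mxtraceZ !mulmxDr mulmxN !mxtraceD.
by rewrite raddfN.
Qed.

Lemma mxtrace_cost_change_le m n (Ds : 'M[RR]_n) (Dl G : 'M[RR]_(m, n)) (M : 'M[RR]_m) lam :
  M^T = M -> 0 < lam -> (forall y, lam * vnorm y ^+ 2 <= qform M y) ->
  (forall x, 0 <= qform Ds x) ->
  - \tr (Ds *m cost_change Dl G M) <= opnorm Ds / lam * frob G ^+ 2.
Proof.
move=> Msym lam0 Mlam Dspsd.
have := mxtrace_mul_psd_ge0 (cost_change_completed_sym Dl G lam^-1 Msym)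
  (cost_change_completed_psd Dl G lam0 Mlam) Dspsd.
rewrite mulmxDr mxtraceD -[Ds *m (_ *: _)]scalemxAr mxtraceZ.
have : lam^-1 * \tr (Ds *m (G^T *m G)) <= lam^-1 * (opnorm Ds * frob G ^+ 2).
  apply: ler_wpM2l; first by rewrite invr_ge0 ltW.
  by rewrite mxtrace_gram; apply: mxtrace_conj_le => x; exact: qform_le_opnorm.
rewrite [opnorm Ds / lam * _]mulrAC [_ * lam^-1]mulrC; lra.
Qed.

Lemma descent_bound_combine (F : realFieldType) (b s q gap FG FGh FE cD c x : F) :
  0 <= b -> q * gap <= s * FG ->
  x <= - b * (s * FG + s * FGh - cD * FE) + b ^+ 2 * (cD * (c * FGh)) ->
  x <= - b * q * gap - b * (s - b * cD * c) * FGh + b * cD * FE.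
Proof. by move=> b0 /(ler_wpM2l b0); lra. Qed.

Section LQR.
Variables (d k : nat) (A : 'M[RR]_d) (B : 'M[RR]_(d, k)) (Q : 'M[RR]_d) (R : 'M[RR]_k)
  (Dxi : 'M[RR]_d) (sigma : RR).
Hypotheses (Qpsd : psd Q) (Rpsd : psd R) (Epsd : psd (Deps B Dxi sigma)).

Local Notation J := (Jcost A B Q R Dxi sigma).
Local Notation stable K := (spectral_radius (A - B *m K) < 1).

Definition state_cov_eq (K : 'M[RR]_(k, d)) (D : 'M[RR]_d) :=
  D = Deps B Dxi sigma + (A - B *m K) *m D *m (A - B *m K)^T.

Definition cost_to_go_eq (K : 'M[RR]_(k, d)) (P : 'M[RR]_d) :=
  P = Q + K^T *m R *m K + (A - B *m K)^T *m P *m (A - B *m K).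

Lemma state_cov_psd K D : stable K -> state_cov_eq K D -> forall x, 0 <= qform D x.
Proof. by move=> stK DK; apply: lyap_solution_psd (spectral_radius_lt1_pow_cvg0 stK) DK Epsd.2. Qed.

Lemma state_cov_ge K D : stable K -> state_cov_eq K D ->
  forall x, lambda_min (Deps B Dxi sigma) * vnorm x ^+ 2 <= qform D x.
Proof.
move=> stK DK x; rewrite DK qformD qform_conj.
by rewrite (le_trans (lambda_min_le_qform Epsd.1 x)) // lerDl (state_cov_psd stK DK).
Qed.

Lemma cost_to_go_psd K P : stable K -> cost_to_go_eq K P -> forall x, 0 <= qform P x.
Proof.
move=> stK PK; apply: (@lyap_solution_psd _ (A - B *m K)^T (Q + K^T *m R *m K)).
- have -> : (fun s => (A - B *m K)^T ^+ s) = (fun s => ((A - B *m K) ^+ s)^T).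
    by apply/funext => s; rewrite trmxX.
  by rewrite -trmx0; apply: mx_cvgT; exact: spectral_radius_lt1_pow_cvg0.
- by rewrite trmxK.
- by move=> x; rewrite qformD qform_conjT addr_ge0 ?Qpsd.2 ?Rpsd.2.
Qed.

Lemma gain_hessian_sym P : P^T = P -> (R + B^T *m P *m B)^T = R + B^T *m P *m B.
Proof. by move=> Psym; rewrite trmxD !trmx_mul trmxK Rpsd.1 Psym mulmxA. Qed.

Lemma gain_hessian_ge P : (forall x, 0 <= qform P x) ->
  forall y, lambda_min R * vnorm y ^+ 2 <= qform (R + B^T *m P *m B) y.
Proof.
move=> Ppsd y; rewrite qformD qform_conjT.
by rewrite (le_trans (lambda_min_le_qform Rpsd.1 y)) // lerDl.
Qed.

Lemma gain_hessian_le P cP : 0 <= cP -> loewner_le P cP%:M ->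
  forall y, qform (R + B^T *m P *m B) y <= (opnorm R + cP * opnorm B ^+ 2) * vnorm y ^+ 2.
Proof.
move=> cP0 PcP y; rewrite qformD qform_conjT mulrDl lerD ?qform_le_opnorm //.
by rewrite (le_trans (loewner_le_scalar PcP _)) // -mulrA ler_wpM2l // opnorm_le2.
Qed.

Lemma cost_to_go_sub (K Dl : 'M[RR]_(k, d)) (P : 'M[RR]_d) :
  cost_to_go_eq K P -> P^T = P ->
  Q + (K - Dl)^T *m R *m (K - Dl) - (P - (A - B *m (K - Dl))^T *m P *m (A - B *m (K - Dl)))
  = cost_change Dl (GK A B R P K) (R + B^T *m P *m B).
Proof.
move=> PK Psym; rewrite [X in _ - (X - _)]PK /GK /cost_change.
rewrite !(trmxD, trmxN, trmx_mul, trmxK, Rpsd.1, Psym).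
rewrite !(mulmxDl, mulmxDr, mulmxN, mulNmx, mulmxA).
by apply/matrixP => i j; rewrite !mxE; ring.
Qed.

Lemma Jcost_sub (K Dl : 'M[RR]_(k, d)) (D D' P : 'M[RR]_d) :
  stable K -> stable (K - Dl) ->
  state_cov_eq K D -> state_cov_eq (K - Dl) D' -> cost_to_go_eq K P -> P^T = P ->
  J (K - Dl) - J K = \tr (D' *m cost_change Dl (GK A B R P K) (R + B^T *m P *m B)).
Proof.
move=> stK stK' DK DK' PK Psym; set L' := A - B *m (K - Dl).
have PD' := mxtrace_lyap_dual DK' (esym (subrK (L'^T *m P *m L') P)).
rewrite (Jcost_lyap _ _ stK' DK') (Jcost_lyap _ _ stK DK) (mxtrace_lyap_dual DK PK) -PD'.
by rewrite opprD addrACA subrr addr0 -linearB -mulmxBl cost_to_go_sub // mxtrace_mulC.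
Qed.

Lemma Jcost_step_le (K Gh : 'M[RR]_(k, d)) (b cD cP : RR) (D D' P : 'M[RR]_d) :
  stable K -> stable (K - b *: Gh) ->
  state_cov_eq K D -> state_cov_eq (K - b *: Gh) D' -> cost_to_go_eq K P ->
  0 <= b -> 0 <= cD -> 0 <= cP -> loewner_le D' cD%:M -> loewner_le P cP%:M ->
  J (K - b *: Gh) - J K <=
    - b * (lambda_min (Deps B Dxi sigma) * frob (GK A B R P K) ^+ 2
           + lambda_min (Deps B Dxi sigma) * frob Gh ^+ 2
           - cD * frob (GK A B R P K - Gh) ^+ 2)
    + b ^+ 2 * (cD * ((opnorm R + cP * opnorm B ^+ 2) * frob Gh ^+ 2)).
Proof.
move=> stK stK' DK DK' PK b0 cD0 cP0 D'cD PcP.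
have Psym := loewner_le_scalar_sym PcP; have D'ge := state_cov_ge stK' DK'.
set G := GK A B R P K; set M := R + B^T *m P *m B.
rewrite (Jcost_sub stK stK' DK DK' PK Psym) -/G -/M cost_change_scale mxtrace_mul_lincomb.
have T1 : lambda_min (Deps B Dxi sigma) * frob G ^+ 2 <= \tr (D' *m (G^T *m G)).
  by rewrite mxtrace_gram; exact: mxtrace_conj_ge.
have T2 : lambda_min (Deps B Dxi sigma) * frob Gh ^+ 2 <= \tr (D' *m (Gh^T *m Gh)).
  by rewrite mxtrace_gram; exact: mxtrace_conj_ge.
have T3 : \tr (D' *m ((G - Gh)^T *m (G - Gh))) <= cD * frob (G - Gh) ^+ 2.
  by rewrite mxtrace_gram; apply: mxtrace_conj_le; exact: loewner_le_scalar.
have T4 : \tr (D' *m (Gh^T *m M *m Gh))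
          <= cD * ((opnorm R + cP * opnorm B ^+ 2) * frob Gh ^+ 2).
  have Nsym : (Gh^T *m M *m Gh)^T = Gh^T *m M *m Gh.
    by rewrite !trmx_mul trmxK gain_hessian_sym // mulmxA.
  have Npsd y : 0 <= qform (Gh^T *m M *m Gh) y.
    by rewrite qform_conjT qformD qform_conjT addr_ge0 ?Rpsd.2 ?(cost_to_go_psd stK PK).
  apply: le_trans (mxtrace_mul_le_scalar Nsym Npsd D'cD) _; rewrite ler_wpM2l //.
  by rewrite -{2}[Gh]trmxK -frob_trmx; apply: mxtrace_conj_le; exact: gain_hessian_le.
apply: lerD; last by rewrite ler_wpM2l ?sqr_ge0.
apply: ler_wnM2l; first by rewrite oppr_le0.
by rewrite lerB ?lerD.
Qed.

Lemma Jcost_gap_le (K Ks : 'M[RR]_(k, d)) (D Ds P : 'M[RR]_d) (lam : RR) :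
  stable K -> stable Ks ->
  state_cov_eq K D -> state_cov_eq Ks Ds -> cost_to_go_eq K P -> P^T = P ->
  (forall x, 0 <= qform Ds x) -> 0 < lam ->
  (forall y, lam * vnorm y ^+ 2 <= qform (R + B^T *m P *m B) y) ->
  J K - J Ks <= opnorm Ds / lam * frob (GK A B R P K) ^+ 2.
Proof.
move=> stK stKs DK DKs PK Psym Dspsd lam0 Mlam.
have Msym := gain_hessian_sym Psym.
have KKs : K - (K - Ks) = Ks by rewrite opprB addrC subrK.
have := Jcost_sub (Dl := K - Ks) (D' := Ds) stK _ DK _ PK Psym.
rewrite KKs => /(_ stKs DKs) gap.
rewrite -opprB gap.
exact: (mxtrace_cost_change_le (K - Ks) (GK A B R P K) Msym lam0 Mlam Dspsd).
Qed.

Lemma Jcost_gap_scaled_le (K Ks : 'M[RR]_(k, d)) (D Ds P : 'M[RR]_d) :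
  stable K -> stable Ks -> state_cov_eq K D -> state_cov_eq Ks Ds -> cost_to_go_eq K P ->
  P^T = P ->
  lambda_min (Deps B Dxi sigma) / (opnorm Ds / lambda_min R) * (J K - J Ks)
  <= lambda_min (Deps B Dxi sigma) * frob (GK A B R P K) ^+ 2.
Proof.
move=> stK stKs DK DKs PK Psym; set c3 := opnorm Ds / lambda_min R.
have smin0 := lambda_min_ge0 Epsd.2.
(* This case includes lambda_min R = 0, where x / 0 = 0. *)
have [->|c30] := eqVneq c3 0; first by rewrite invr0 mulr0 mul0r mulr_ge0 ?sqr_ge0.
have lam0 : 0 < lambda_min R.
  rewrite lt_def (lambda_min_ge0 Rpsd.2) andbT.
  by apply: contra c30 => /eqP l0; rewrite /c3 l0 invr0 mulr0.
have c3pos : 0 < c3 by rewrite lt_def c30 divr_ge0 ?opnorm_ge0 // ltW.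
have gap := Jcost_gap_le stK stKs DK DKs PK Psym (state_cov_psd stKs DKs) lam0
  (gain_hessian_ge (cost_to_go_psd stK PK)).
apply: le_trans (ler_wpM2l _ gap) _; first by rewrite divr_ge0 // ltW.
by rewrite -/c3 mulrA divfK.
Qed.

Lemma Jcost_descent (K Gh Ks : 'M[RR]_(k, d)) (b cD cP : RR) (D D' Ds P : 'M[RR]_d) :
  stable K -> stable (K - b *: Gh) -> stable Ks ->
  state_cov_eq K D -> state_cov_eq (K - b *: Gh) D' -> state_cov_eq Ks Ds ->
  cost_to_go_eq K P ->
  0 <= b -> 0 <= cD -> 0 <= cP -> loewner_le D' cD%:M -> loewner_le P cP%:M ->
  J (K - b *: Gh) - J K <=
    - b * (lambda_min (Deps B Dxi sigma) / (opnorm Ds / lambda_min R)) * (J K - J Ks)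
    - b * (lambda_min (Deps B Dxi sigma) - b * cD * (opnorm R + cP * opnorm B ^+ 2))
      * frob Gh ^+ 2
    + b * cD * frob (GK A B R P K - Gh) ^+ 2.
Proof.
move=> stK stK' stKs DK DK' DKs PK b0 cD0 cP0 D'cD PcP.
apply: descent_bound_combine b0 _ (Jcost_step_le stK stK' DK DK' PK b0 cD0 cP0 D'cD PcP).
exact: Jcost_gap_scaled_le stK stKs DK DKs PK (loewner_le_scalar_sym PcP).
Qed.

End LQR.

Unset Implicit Arguments.
Local Close Scope classical_set_scope.

Theorem lemma7
  (d k : nat)
  (A : 'M[RR]_d) (B : 'M[RR]_(d, k)) (Q : 'M[RR]_d) (R : 'M[RR]_k)
  (Dxi : 'M[RR]_d) (sigma : RR)
  (hQ : pd Q) (hR : pd R) (hDxi : psd Dxi) (hsigma : 0 < sigma)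
  (* optimal gain K* from the stabilizing solution P* of the Riccati equation *)
  (Pstar : 'M[RR]_d)
  (hPsym : symmx Pstar)
  (hDARE : Pstar = Q + A^T *m Pstar *m A
                   - A^T *m Pstar *m B *m invmx (R + B^T *m Pstar *m B)
                       *m B^T *m Pstar *m A)
  (hPstab : spectral_radius (A - B *m Kopt A B R Pstar) < 1)
  (* the algorithm *)
  (alpha beta : nat -> RR) (halpha : forall t, 0 < alpha t)
  (hbeta : forall t, 0 < beta t)
  (theta g : nat -> 'M[RR]_(d + k)) (K : nat -> 'M[RR]_(k, d))
  (htheta0 : theta 0%N = 0) (hK0 : K 0%N = 0)
  (htheta : forall t, theta t.+1 = theta t - alpha t *: g t)
  (hK : forall t, K t.+1 = K t - beta t *: Ghat (theta t) (K t))
  (* D_eps positive definite *)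
  (hDeps : pd (Deps B Dxi sigma))
  (* uniform bounds *)
  (rho cA cE cth cK : RR)
  (hrho0 : 0 < rho) (hrho1 : rho < 1)
  (hcA : 0 < cA) (hcE : 0 < cE) (hcth : 0 < cth) (hcK : 0 < cK)
  (hrhoK : forall t, spectral_radius (A - B *m K t) <= rho)
  (hAK : forall t, opnorm (A - B *m K t) <= cA)
  (hE : forall t, opnorm (Emx A B (K t)) <= cE)
  (hth : forall t, frob (theta t) <= cth)
  (hKt : forall t, opnorm (K t) <= cK)
  (hKs : opnorm (Kopt A B R Pstar) <= cK)
  (* D_{K_t}, P_{K_t}, D_{K*} as solutions of their Lyapunov equations *)
  (DK PK : nat -> 'M[RR]_d) (DKs : 'M[RR]_d)
  (hDK : forall t, DK t = Deps B Dxi sigma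
                          + (A - B *m K t) *m DK t *m (A - B *m K t)^T)
  (hPK : forall t, PK t = Q + (K t)^T *m R *m K t
                          + (A - B *m K t)^T *m PK t *m (A - B *m K t))
  (hDKs : DKs = Deps B Dxi sigma
                + (A - B *m Kopt A B R Pstar) *m DKs
                  *m (A - B *m Kopt A B R Pstar)^T)
  (cD cP : RR)
  (hcD : forall t, loewner_le (DK t) (cD%:M))
  (hcDs : loewner_le DKs (cD%:M))
  (hcP : forall t, loewner_le (PK t) (cP%:M)) :
  let J := Jcost A B Q R Dxi sigma in
  let smin := lambda_min (Deps B Dxi sigma) in
  let c3 := opnorm DKs / lambda_min R in
  forall t : nat,
    J (K t.+1) - J (K t)
    <= - beta t * (smin / c3) * (J (K t) - J (Kopt A B R Pstar))
       - beta t * (smin - beta t * cD * (opnorm R + cP * opnorm B ^+ 2))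
         * frob (Ghat (theta t) (K t)) ^+ 2
       + beta t * cD * frob (GK A B R (PK t) (K t) - Ghat (theta t) (K t)) ^+ 2.
Proof.
move=> J smin c3 t.
have [d0|d0] := posnP d.
  have flat (M : 'M[RR]_(k, d)) : M = 0.
    by apply/matrixP => i j; exfalso; have := ltn_ord j; move: (nat_of_ord j); rewrite d0.
  rewrite (flat (K t.+1)) (flat (K t)) (flat (Kopt A B R Pstar)).
  rewrite (flat (Ghat _ _)) (flat (GK _ _ _ _ _ - _)) subrr frob0 expr0n !mulr0.
  by rewrite subrr addr0.
have stable t' : spectral_radius (A - B *m K t') < 1 := le_lt_trans (hrhoK t') hrho1.
have Qpsd := pd_psd hQ; have Rpsd := pd_psd hR; have Epsd := pd_psd hDeps.
have cD0 := loewner_le_scalar_ge0 d0 (state_cov_psd Epsd (stable t.+1) (hDK t.+1)) (hcD t.+1).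
have cP0 := loewner_le_scalar_ge0 d0 (cost_to_go_psd Qpsd Rpsd (stable t) (hPK t)) (hcP t).
move: (stable t.+1) (hDK t.+1) (hcD t.+1); rewrite hK => stable1 DK1 cD1.
have descent := Jcost_descent Qpsd Rpsd Epsd (stable t) stable1 hPstab (hDK t) DK1 hDKs
  (hPK t) (ltW (hbeta t)) cD0 cP0 cD1 (hcP t).
exact: descent.
Qed.
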